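(* Let $\mathbb K\in\{\mathbb R,\mathbb C\}$ and let $T$ be a norm one symmetric bilinear form on the Hilbert space $\mathbb K^2$ (with its standard inner product) that attains its norm at $(\mathbf{x},\mathbf{y})$, where $\mathbf{x},\mathbf{y}$ are norm one vectors with $\mathbf{x}\nparallel\mathbf{y}$. Then there is an orthonormal basis $F=\{\mathbf{f}_1,\mathbf{f}_2\}$ of $\mathbb K^2$ such that $$[T]_F=\begin{pmatrix}1&0\\0&-1\end{pmatrix}.$$ Consequently, the matrix $[T]_G$ is unitary for every orthonormal basis $G$ of $\mathbb K^2$. Moreover, in the real case the basis $\{\mathbf{f}_1,\mathbf{f}_2\}$ is unique up to signs.
   Context: $\mathbf{x}\parallel\mathbf{y}$ means $\mathbf{x}=\lambda\mathbf{y}$ for some $\lambda\in\mathbb K$, and $\mathbf{x}\nparallel\mathbf{y}$ means this fails. A bilinear form is $\mathbb K$-bilinear (not sesquilinear); its norm is $\|T\|=\sup\{|T(\mathbf{w}_1,\mathbf{w}_2)|:\|\mathbf{w}_1\|,\|\mathbf{w}_2\|\le1\}$, and $T$ attains its norm at $(\mathbf{x},\mathbf{y})$ if $|T(\mathbf{x},\mathbf{y})|=\|T\|$. For a basis $F=\{\mathbf{f}_1,\mathbf{f}_2\}$, $[T]_F$ is the matrix $(T(\mathbf{f}_i,\mathbf{f}_j))_{i,j}$, so $T(\mathbf{w}_1,\mathbf{w}_2)=[\mathbf{w}_1]_F[T]_F[\mathbf{w}_2]_F^t$ with $[\mathbf{w}]_F$ the row coordinate vector of $\mathbf{w}$ in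 $F$. *)

From mathcomp Require Import all_boot all_order all_algebra.
From mathcomp Require Import complex.
From mathcomp Require Import reals.
Set Implicit Arguments. Unset Strict Implicit. Unset Printing Implicit Defensive.
Import Order.TTheory GRing.Theory Num.Theory.
Local Open Scope ring_scope.

(* K^2 is modelled as row vectors 'rV[K]_2.  [cj] is the conjugation of K
   (the identity when K = R, complex conjugation when K = C). *)

Definition dotp (K : numFieldType) (cj : K -> K) (u v : 'rV[K]_2) : K :=
  \sum_(i < 2) u 0 i * cj (v 0 i).

Definition in_ball (K : numFieldType) (cj : K -> K) (w : 'rV[K]_2) : Prop :=
  dotp cj w w <= 1.
Definition unit_vec (K : numFieldType) (cj : K -> K) (w : 'rV[K]_2) : Prop :=
  dotp cj w w = 1.

Definition bilinear_form (K : numFieldType) (T : 'rV[K]_2 -> 'rV[K]_2 -> K) : Prop :=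
  (forall (a : K) u u' v, T (a *: u + u') v = a * T u v + T u' v) /\
  (forall (a : K) u v v', T u (a *: v + v') = a * T u v + T u v').
Definition symmetric_form (K : numFieldType) (T : 'rV[K]_2 -> 'rV[K]_2 -> K) : Prop :=
  forall u v, T u v = T v u.

Definition is_form_norm (K : numFieldType) (cj : K -> K)
    (T : 'rV[K]_2 -> 'rV[K]_2 -> K) (c : K) : Prop :=
  (forall w1 w2, in_ball cj w1 -> in_ball cj w2 -> `|T w1 w2| <= c) /\
  (forall d : K, (forall w1 w2, in_ball cj w1 -> in_ball cj w2 -> `|T w1 w2| <= d) ->
     c <= d).

Definition parallel (K : numFieldType) (x y : 'rV[K]_2) : Prop :=
  exists l : K, x = l *: y.

(* F = {F 0, F 1} is an orthonormal basis of K^2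
   (an orthonormal pair in the 2-dimensional space K^2 is a basis) *)
Definition orthonormal_basis (K : numFieldType) (cj : K -> K) (F : 'I_2 -> 'rV[K]_2) : Prop :=
  forall i j, dotp cj (F i) (F j) = (i == j)%:R.

Definition form_matrix (K : numFieldType) (T : 'rV[K]_2 -> 'rV[K]_2 -> K)
    (F : 'I_2 -> 'rV[K]_2) : 'M[K]_2 :=
  \matrix_(i, j) T (F i) (F j).

Definition diag1m1 (K : numFieldType) : 'M[K]_2 :=
  \matrix_(i, j) (if i == j then (if i == 0 then 1 else -1) else 0).

Definition unitary_mx (K : numFieldType) (cj : K -> K) (M : 'M[K]_2) : Prop :=
  M *m (map_mx cj M)^T = 1%:M.

Definition lemma_hyps (K : numFieldType) (cj : K -> K)
    (T : 'rV[K]_2 -> 'rV[K]_2 -> K) (x y : 'rV[K]_2) : Prop :=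
  [/\ bilinear_form T, symmetric_form T, is_form_norm cj T 1,
      unit_vec cj x /\ unit_vec cj y & ~ parallel x y /\ `|T x y| = 1].

Definition lemma_main (K : numFieldType) (cj : K -> K) : Prop :=
  forall (T : 'rV[K]_2 -> 'rV[K]_2 -> K) (x y : 'rV[K]_2),
    lemma_hyps cj T x y ->
    (exists F, orthonormal_basis cj F /\ form_matrix T F = diag1m1 K) /\
    (forall G, orthonormal_basis cj G -> unitary_mx cj (form_matrix T G)).

Definition lemma_unique (K : numFieldType) (cj : K -> K) : Prop :=
  forall (T : 'rV[K]_2 -> 'rV[K]_2 -> K) (x y : 'rV[K]_2),
    lemma_hyps cj T x y ->
    forall F G, orthonormal_basis cj F -> form_matrix T F = diag1m1 K ->
      orthonormal_basis cj G -> form_matrix T G = diag1m1 K ->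
      forall i, G i = F i \/ G i = - F i.

From Pilot Require Import Defs.
From mathcomp Require Import all_boot all_order all_algebra.
From mathcomp Require Import complex ring lra.
From mathcomp Require Import reals.
Set Implicit Arguments. Unset Strict Implicit. Unset Printing Implicit Defensive.
Import Order.TTheory GRing.Theory Num.Theory.
Local Open Scope ring_scope.

(* Rotating x by a phase we may assume T(x,y) = 1.  The Riesz vector z of
   T(.,y) then has norm at most 1 (this is where ||T|| = 1 is used) and
   <x,z> = 1, so ||x - z||^2 = ||z||^2 - 1 <= 0 forces z = x: T(u,y) = <u,x>,
   and by symmetry T(u,x) = <u,y>.  Thus T(u,x+y) = <u,x+y> and
   T(u,x-y) = -<u,x-y>.  Symmetry of T makes one Gram-Schmidt step preserve
   the second relation, and x, y not parallel keeps both vectors nonzero, so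
   normalising gives an orthonormal basis F with [T]_F = diag(1,-1).  Any
   orthonormal basis G is W F for a unitary W, so [T]_G = W diag(1,-1) W^T is
   unitary; in the real case W is orthogonal and commutes with diag(1,-1),
   hence is diagonal with entries +-1. *)

Lemma ord2_ind (P : 'I_2 -> Prop) : P 0 -> P 1 -> forall i, P i.
Proof.
move=> P0 P1 [[|[|i]] lti] //.
- by have -> : Ordinal lti = 0 by apply/val_inj.
- by have -> : Ordinal lti = 1 by apply/val_inj.
Qed.

Lemma sum_ord2 (V : nmodType) (F : 'I_2 -> V) : \sum_(i < 2) F i = F 0 + F 1.
Proof. by rewrite !big_ord_recl big_ord0 addr0; congr (F _ + F _); apply/val_inj. Qed.

Lemma nonparallel_indep (K : numFieldType) (x y : 'rV[K]_2) a b :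
  ~ parallel x y -> y != 0 -> a *: x + b *: y = 0 -> a = 0 /\ b = 0.
Proof.
move=> xNy y0 abxy; have a0 : a = 0.
  have [//|a0] := eqVneq a 0; case: xNy; exists (- b / a); apply: (scalerI a0).
  by rewrite scalerA mulrCA mulfV // mulr1 scaleNr; apply/eqP; rewrite -addr_eq0 abxy.
split=> //; move: abxy; rewrite a0 scale0r add0r => /eqP.
by rewrite scaler_eq0 (negbTE y0) orbF => /eqP.
Qed.

Definition basis_mx (K : numFieldType) (F : 'I_2 -> 'rV[K]_2) : 'M[K]_2 := \matrix_i F i.

Section BilinearForm.
Variables (K : numFieldType) (T : 'rV[K]_2 -> 'rV[K]_2 -> K).
Hypothesis T_bilinear : bilinear_form T.

Lemma form0l v : T 0 v = 0.
Proof.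
by have := T_bilinear.1 1 0 0 v; rewrite scale1r addr0 mul1r -{1}[T 0 v]addr0 => /addrI.
Qed.

Lemma form0r u : T u 0 = 0.
Proof.
by have := T_bilinear.2 1 u 0 0; rewrite scale1r addr0 mul1r -{1}[T u 0]addr0 => /addrI.
Qed.

Lemma formDl u u' v : T (u + u') v = T u v + T u' v.
Proof. by have := T_bilinear.1 1 u u' v; rewrite scale1r mul1r. Qed.

Lemma formDr u v v' : T u (v + v') = T u v + T u v'.
Proof. by have := T_bilinear.2 1 u v v'; rewrite scale1r mul1r. Qed.

Lemma formZl a u v : T (a *: u) v = a * T u v.
Proof. by have := T_bilinear.1 a u 0 v; rewrite !addr0 form0l addr0. Qed.

Lemma formZr a u v : T u (a *: v) = a * T u v.
Proof. by have := T_bilinear.2 a u v 0; rewrite !addr0 form0r addr0. Qed.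

Lemma formBr u v v' : T u (v - v') = T u v - T u v'.
Proof. by rewrite formDr -scaleN1r formZr mulN1r. Qed.

Lemma form_mxE u v : T u v = (u *m form_matrix T (delta_mx 0) *m v^T) 0 0.
Proof.
rewrite {1}(row_sum_delta u) {1}(row_sum_delta v) !sum_ord2.
by rewrite !formDl !formDr !formZl !formZr !(mxE, sum_ord2); ring.
Qed.

Lemma form_matrixE F :
  form_matrix T F = basis_mx F *m form_matrix T (delta_mx 0) *m (basis_mx F)^T.
Proof. by apply/matrixP => i j; rewrite mxE form_mxE !(mxE, sum_ord2); ring. Qed.

Lemma form_matrix_congr F G W :
  basis_mx G = W *m basis_mx F -> form_matrix T G = W *m form_matrix T F *m W^T.
Proof. by move=> GWF; rewrite (form_matrixE F) (form_matrixE G) GWF trmx_mul !mulmxA. Qed.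

End BilinearForm.

Section InnerProduct.
Variables (K : numFieldType) (cj : {rmorphism K -> K}).
Hypothesis cjK : involutive cj.
Hypothesis mul_conj : forall z, z * cj z = `|z| ^+ 2.
Hypothesis conj_sqrt : forall r, 0 < r -> exists2 s, cj s = s & s ^+ 2 = r.

Local Notation dot := (dotp cj).

Lemma dotpE u v : dot u v = u 0 0 * cj (v 0 0) + u 0 1 * cj (v 0 1).
Proof. by rewrite /dotp sum_ord2. Qed.

Lemma dotpC u v : dot v u = cj (dot u v).
Proof. rewrite !dotpE rmorphD !rmorphM !cjK; ring. Qed.

Lemma dotpZl a u v : dot (a *: u) v = a * dot u v.
Proof. rewrite !dotpE !mxE; ring. Qed.

Lemma dotpZr a u v : dot u (a *: v) = cj a * dot u v.
Proof. rewrite !dotpE !mxE !rmorphM; ring. Qed.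

Lemma dotpDr u v w : dot u (v + w) = dot u v + dot u w.
Proof. rewrite !dotpE !mxE !rmorphD; ring. Qed.

Lemma dotpBr u v w : dot u (v - w) = dot u v - dot u w.
Proof. rewrite !dotpE !mxE !rmorphB; ring. Qed.

Lemma dotpBl u v w : dot (u - v) w = dot u w - dot v w.
Proof. rewrite !dotpE !mxE; ring. Qed.

Lemma dotp_conj u : cj (dot u u) = dot u u.
Proof. by rewrite -dotpC. Qed.

Lemma dotp_normE u : dot u u = `|u 0 0| ^+ 2 + `|u 0 1| ^+ 2.
Proof. by rewrite dotpE !mul_conj. Qed.

Lemma dotp_ge0 u : 0 <= dot u u.
Proof. by rewrite dotp_normE addr_ge0 // exprn_ge0. Qed.

Lemma dotp_eq0 u : (dot u u == 0) = (u == 0).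
Proof.
apply/idP/eqP => [|->]; last by rewrite dotpE !mxE !mul0r addr0.
rewrite dotp_normE paddr_eq0 ?exprn_ge0 // !expf_eq0 /= !normr_eq0.
by case/andP=> /eqP u0 /eqP u1; apply/rowP; elim/ord2_ind; rewrite mxE.
Qed.

Lemma dotp_gt0 u : (0 < dot u u) = (u != 0).
Proof. by rewrite lt_def dotp_ge0 dotp_eq0 andbT. Qed.

Lemma unit_vec_neq0 u : unit_vec cj u -> u != 0.
Proof. by rewrite /unit_vec -dotp_eq0 => ->; exact: oner_neq0. Qed.

Lemma unit_vec_in_ball u : unit_vec cj u -> in_ball cj u.
Proof. by rewrite /in_ball => ->. Qed.

Lemma unit_vec_normalize u : u != 0 -> exists2 s, cj s = s & unit_vec cj (s *: u).
Proof.
rewrite -dotp_gt0 => u_gt0; have [s cs sE] := conj_sqrt u_gt0.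
have s0 : s != 0 by apply: contraTneq u_gt0 => s0; rewrite -sE s0 expr0n ltxx.
exists s^-1; first by rewrite fmorphV cs.
by rewrite /unit_vec dotpZl dotpZr fmorphV cs -sE mulrA -expr2 exprVn mulVf ?expf_neq0.
Qed.

Lemma unit_vec_dotp_eq1 x z : unit_vec cj x -> dot z z <= 1 -> dot x z = 1 -> z = x.
Proof.
move=> x1 z_le1 xz1.
have xzE : dot (x - z) (x - z) = dot z z - 1.
  by rewrite dotpBl !dotpBr (dotpC x z) xz1 rmorph1 x1; ring.
apply/eqP; rewrite eq_sym -subr_eq0 -dotp_eq0 eq_le dotp_ge0 andbT xzE.
by rewrite subr_le0.
Qed.

Definition eigen_form (T : 'rV[K]_2 -> 'rV[K]_2 -> K) (l : K) v :=
  forall u, T u v = l * dot u v.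

Section Form.
Variable T : 'rV[K]_2 -> 'rV[K]_2 -> K.
Hypothesis T_bilinear : bilinear_form T.

Lemma form_riesz v : exists z, forall u, T u v = dot u z.
Proof.
exists (\row_k cj (T (delta_mx 0 k) v)) => u.
by rewrite {1}(row_sum_delta u) sum_ord2 formDl // !formZl // dotpE !mxE !cjK.
Qed.

Hypothesis T_le1 : forall w1 w2, in_ball cj w1 -> in_ball cj w2 -> `|T w1 w2| <= 1.

Lemma riesz_dotp_le1 y z : unit_vec cj y -> (forall u, T u y = dot u z) -> dot z z <= 1.
Proof.
move=> y1 Tz; have [->|] := eqVneq (dot z z) 0; first exact: ler01.
rewrite dotp_eq0 => z0; have [s cs sz1] := unit_vec_normalize z0.
have dotzE : dot z z = `|s * dot z z| ^+ 2.
  move: sz1; rewrite /unit_vec dotpZl dotpZr cs => sz1.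
  by rewrite -mul_conj rmorphM cs dotp_conj -[LHS]mul1r -sz1; ring.
have := T_le1 (unit_vec_in_ball sz1) (unit_vec_in_ball y1).
by rewrite Tz dotpZl => le1; rewrite dotzE exprn_ile1.
Qed.

Lemma norming_pair_riesz x y :
  unit_vec cj x -> unit_vec cj y -> T x y = 1 -> forall u, T u y = dot u x.
Proof.
move=> x1 y1 Txy; have [z Tz] := form_riesz y.
suff <- : z = x by [].
by apply: (unit_vec_dotp_eq1 x1 (riesz_dotp_le1 y1 Tz)); rewrite -Tz.
Qed.

Lemma norming_pair_phase x y : unit_vec cj x -> ~ parallel x y -> `|T x y| = 1 ->
  exists x', [/\ unit_vec cj x', ~ parallel x' y & T x' y = 1].
Proof.
move=> x1 xNy Txy; set t := T x y.
have tt1 : t * cj t = 1 by rewrite mul_conj Txy expr1n.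
exists (cj t *: x); split.
- by rewrite /unit_vec dotpZl dotpZr x1 cjK mulr1 mulrC.
- move=> [l x'E]; apply: xNy; exists (t * l).
  by rewrite -scalerA -x'E scalerA tt1 scale1r.
- by rewrite formZl // mulrC.
Qed.

Lemma eigen_formZ l s v : cj s = s -> eigen_form T l v -> eigen_form T l (s *: v).
Proof. by move=> cs Tv u; rewrite formZr // Tv dotpZr cs mulrCA. Qed.

Hypothesis T_sym : Defs.symmetric_form T.

Lemma eigen_form_orthogonalize l m g h :
  eigen_form T l g -> eigen_form T m h -> g != 0 ->
  exists c, eigen_form T m (h - c *: g) /\ dot (h - c *: g) g = 0.
Proof.
move=> Tg Th g0; have G0 : dot g g != 0 by rewrite dotp_eq0.
exists (dot h g / dot g g); split; last by rewrite dotpBl dotpZl divfK ?subrr.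
have hg : l * dot h g = m * dot g h by rewrite -Tg -Th T_sym.
move=> u; rewrite formBr // formZr // Tg Th dotpBr dotpZr fmorph_div dotp_conj -dotpC.
by rewrite mulrBr mulrCA -mulrA mulrA hg; congr (_ - _); ring.
Qed.

Lemma diag1m1_basis f1 f2 : unit_vec cj f1 -> unit_vec cj f2 -> dot f2 f1 = 0 ->
  eigen_form T 1 f1 -> eigen_form T (-1) f2 ->
  exists F, orthonormal_basis cj F /\ form_matrix T F = diag1m1 K.
Proof.
move=> f11 f21 f21_0 Tf1 Tf2.
have f12_0 : dot f1 f2 = 0 by rewrite dotpC f21_0 rmorph0.
exists (fun i => if i == 0 then f1 else f2); split; first by elim/ord2_ind; elim/ord2_ind.
apply/matrixP; elim/ord2_ind; elim/ord2_ind; rewrite !mxE /= ?Tf1 ?Tf2.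
- by rewrite f11 mulr1.
- by rewrite f12_0 mulr0.
- by rewrite f21_0 mulr0.
- by rewrite f21 mulr1.
Qed.

End Form.

Lemma exists_diag1m1_basis T x y : lemma_hyps cj T x y ->
  exists F, orthonormal_basis cj F /\ form_matrix T F = diag1m1 K.
Proof.
case=> Tbil Tsym [T_le1 _] [x1 y1] [xNy Txy].
have [x' [x'1 x'Ny Tx'y]] := norming_pair_phase Tbil x1 xNy Txy.
have Ty := norming_pair_riesz Tbil T_le1 x'1 y1 Tx'y.
have Tx' := norming_pair_riesz Tbil T_le1 y1 x'1 (etrans (Tsym _ _) Tx'y).
have Tg : eigen_form T 1 (x' + y).
  by move=> u; rewrite formDr // Ty Tx' dotpDr addrC mul1r.
have Th : eigen_form T (-1) (x' - y).
  by move=> u; rewrite formBr // Ty Tx' dotpBr mulN1r opprB.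
have y0 := unit_vec_neq0 y1.
have g0 : x' + y != 0.
  apply/eqP => g0; have [] := nonparallel_indep (a := 1) (b := 1) x'Ny y0.
    by rewrite !scale1r.
  by move/eqP; rewrite oner_eq0.
have [c [Th' h'g]] := eigen_form_orthogonalize Tbil Tsym Tg Th g0.
have h'0 : x' - y - c *: (x' + y) != 0.
  apply/eqP => h'0; have [] := nonparallel_indep (a := 1 - c) (b := - (1 + c)) x'Ny y0.
    by rewrite -h'0; apply/rowP => k; rewrite !mxE; ring.
  move/eqP; rewrite subr_eq0 => /eqP <- /eqP.
  by rewrite oppr_eq0 -(natrD K 1 1) pnatr_eq0.
have [s1 cs1 f11] := unit_vec_normalize g0.
have [s2 cs2 f21] := unit_vec_normalize h'0.
apply: (diag1m1_basis f11 f21 _ (eigen_formZ Tbil cs1 Tg) (eigen_formZ Tbil cs2 Th')).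
by rewrite dotpZl dotpZr h'g !mulr0.
Qed.

Lemma orthonormal_basis_unitary F :
  orthonormal_basis cj F -> unitary_mx cj (basis_mx F).
Proof. by move=> Fonb; apply/matrixP => i j; rewrite !mxE sum_ord2 !mxE -Fonb dotpE. Qed.

Lemma unitary_mxC M : unitary_mx cj M -> (map_mx cj M)^T *m M = 1%:M.
Proof. exact: mulmx1C. Qed.

Lemma unitary_mxM A B : unitary_mx cj A -> unitary_mx cj B -> unitary_mx cj (A *m B).
Proof. by move=> Au Bu; rewrite /unitary_mx map_mxM trmx_mul mulmxA -(mulmxA A) Bu mulmx1. Qed.

Lemma unitary_map_mx M : unitary_mx cj M -> unitary_mx cj (map_mx cj M).
Proof. by move=> Mu; rewrite /unitary_mx map_trmx -map_mxM Mu map_mx1. Qed.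

Lemma unitary_trmx M : unitary_mx cj M -> unitary_mx cj M^T.
Proof.
move=> /unitary_mxC Mu; rewrite /unitary_mx -map_trmx trmxK -[map_mx cj M]trmxK.
by rewrite -trmx_mul Mu trmx1.
Qed.

Lemma unitary_diag1m1 : unitary_mx cj (diag1m1 K).
Proof.
apply/matrixP; elim/ord2_ind; elim/ord2_ind;
  rewrite !(mxE, sum_ord2) /= ?rmorph0 ?rmorph1 ?rmorphN1; ring.
Qed.

Lemma unitary_form_matrix T x y G : lemma_hyps cj T x y -> orthonormal_basis cj G ->
  unitary_mx cj (form_matrix T G).
Proof.
move=> Thyps Gonb; have [F [Fonb FD]] := exists_diag1m1_basis Thyps.
have Fu := orthonormal_basis_unitary Fonb.
set W := basis_mx G *m (map_mx cj (basis_mx F))^T.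
have GWF : basis_mx G = W *m basis_mx F by rewrite -mulmxA unitary_mxC // mulmx1.
have Wu : unitary_mx cj W.
  exact: unitary_mxM (orthonormal_basis_unitary Gonb) (unitary_trmx (unitary_map_mx Fu)).
case: Thyps => Tbil _ _ _ _; rewrite (form_matrix_congr Tbil GWF) FD.
exact: unitary_mxM (unitary_mxM Wu unitary_diag1m1) (unitary_trmx Wu).
Qed.

Lemma lemma_main_conj : lemma_main cj.
Proof.
move=> T x y Thyps; split=> [|G]; first exact: exists_diag1m1_basis Thyps.
exact: unitary_form_matrix Thyps.
Qed.

End InnerProduct.

Lemma orthogonal_diag1m1_rows (K : realFieldType) (W : 'M[K]_2) :
  W *m W^T = 1%:M -> W *m diag1m1 K *m W^T = diag1m1 K ->
  forall i, row i W = delta_mx 0 i \/ row i W = - delta_mx 0 i.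
Proof.
move=> WWt WD; have WtW := mulmx1C WWt.
have WDC : W *m diag1m1 K = diag1m1 K *m W by rewrite -{2}WD -(mulmxA _ W^T) WtW mulmx1.
have entry (M N : 'M[K]_2) i j : M = N -> M i j = N i j by move->.
have w01 : W 0 1 = 0.
  by have := entry _ _ 0 1 WDC; rewrite !(mxE, sum_ord2) /= => ?; lra.
have w10 : W 1 0 = 0.
  by have := entry _ _ 1 0 WDC; rewrite !(mxE, sum_ord2) /= => ?; lra.
have wii i : W i i ^+ 2 = 1.
  have := entry _ _ i i WWt; rewrite !(mxE, sum_ord2) eqxx /= expr2.
  by elim/ord2_ind: i; rewrite ?w01 ?w10 mulr0 ?addr0 ?add0r.
have offdiag i k : i != k -> W i k = 0.
  by elim/ord2_ind: i; elim/ord2_ind: k; rewrite ?eqxx.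
move=> i; have /eqP := wii i; rewrite sqrf_eq1 => /orP[] /eqP wi; [left | right];
  apply/rowP => k; rewrite !mxE /=; have [<-|/offdiag->] := eqVneq i k;
  by rewrite ?wi ?oppr0.
Qed.

Lemma diag1m1_basis_unique (K : realFieldType) T F G : bilinear_form T ->
  orthonormal_basis (fun r : K => r) F -> form_matrix T F = diag1m1 K ->
  orthonormal_basis (fun r : K => r) G -> form_matrix T G = diag1m1 K ->
  forall i, G i = F i \/ G i = - F i.
Proof.
move=> Tbil Fonb FD Gonb GD.
have Fu := @orthonormal_basis_unitary K idfun F Fonb.
set W := basis_mx G *m (map_mx idfun (basis_mx F))^T.
have GWF : basis_mx G = W *m basis_mx F by rewrite -mulmxA unitary_mxC // mulmx1.
have WWt : W *m W^T = 1%:M.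
  have : unitary_mx idfun W.
    apply: unitary_mxM (@orthonormal_basis_unitary K idfun G Gonb) _.
    exact: unitary_trmx (unitary_map_mx Fu).
  by rewrite /unitary_mx map_mx_id.
have WD : W *m diag1m1 K *m W^T = diag1m1 K.
  by rewrite -{1}FD -(form_matrix_congr Tbil GWF) GD.
move=> i; rewrite -(rowK G i) -/(basis_mx G) GWF row_mul.
by case: (orthogonal_diag1m1_rows WWt WD i) => ->; [left | right]; rewrite ?mulNmx -rowE rowK.
Qed.

Theorem lemma2p1 (R : realType) :
  [/\ lemma_main (fun r : R => r),
      lemma_main (fun z : R[i] => Num.conj z) &
      lemma_unique (fun r : R => r)].
Proof.
split.
- apply: (@lemma_main_conj R idfun) => // [z | r r_gt0].
    by rewrite real_normK ?num_real // expr2.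
  by exists (Num.sqrt r); rewrite // sqr_sqrtr ?ltW.
- apply: (@lemma_main_conj R[i] Num.conj) => [| z | r r_gt0]; first exact: conjCK.
    by rewrite normCK.
  by exists (sqrtC r); [apply: geC0_conj; rewrite sqrtC_ge0 ltW | exact: sqrtCK].
- by move=> T x y [Tbil _ _ _ _] F G; exact: diag1m1_basis_unique.
Qed.
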